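(* Let $(H,\mu_H,\Delta_H,\alpha_H)$ be a Hom-bialgebra and $(C,\mu_C,\alpha_C)$ a right $H$-module Hom-algebra with action $c\otimes h\mapsto c\cdot h$, with $\alpha_H,\alpha_C$ bijective. Then the Hom-smash product $H\# C$ is a left $H$-comodule Hom-algebra via $\lambda_{H\# C}:H\# C\to H\otimes(H\# C)$, $\lambda_{H\# C}(h\# c)=h_1\otimes(h_2\#\alpha_C(c))$.
   Context: Over a field $k$, no (co)units; $\Delta(h)=h_1\otimes h_2$. Hom-associative algebra $(A,\mu,\alpha)$: $\alpha(aa')=\alpha(a)\alpha(a')$, $\alpha(a)(a'a'')=(aa')\alpha(a'')$; morphisms commute with structure maps and multiplications; tensor products are componentwise. Hom-bialgebra $(H,\mu,\Delta,\alpha)$: $(H,\mu,\alpha)$ Hom-associative, $\Delta(h_1)\otimes\alpha(h_2)=\alpha(h_1)\otimes\Delta(h_2)$, $\Delta(hh')=h_1h'_1\otimes h_2h'_2$, $\Delta(\alpha(h))=\alpha(h_1)\otimes\alpha(h_2)$. Right $H$-module Hom-algebra: Hom-associative $(C,\mu_C,\alpha_C)$ with action satisfying $\alpha_C(c\cdot h)=\alpha_C(c)\cdot\alpha_H(h)$, $(c\cdot h)\cdot\alpha_H(h')=\alpha_C(c)\cdot(hh')$, $(cc')\cdot\alpha_H^2(h)=(c\cdot h_1)(c'\cdot h_2)$. Hom-smash product $H\# C$: $H\otimes C$, structure map $\alpha_H\otimes\alpha_C$, product $(h\# c)(h'\# c')=h\alpha_H^{-1}(h'_1)\#(\alpha_C^{-1}(c)\cdot\alpha_H^{-2}(h'_2))c'$.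 A left $H$-comodule structure on $(M,\alpha_M)$ is $\lambda:M\to H\otimes M$ with $(\alpha_H\otimes\alpha_M)\circ\lambda=\lambda\circ\alpha_M$ and $(\Delta_H\otimes\alpha_M)\circ\lambda=(\alpha_H\otimes\lambda)\circ\lambda$; a left $H$-comodule Hom-algebra is a Hom-associative algebra $D$ with a left $H$-comodule structure $D\to H\otimes D$ that is a morphism of Hom-associative algebras. *)

(* Vector spaces over a field k are [lmodType k];
   tensor products are given by their universal property. *)
From HB Require Import structures.
From mathcomp Require Import all_boot all_algebra.
From Stdlib Require Import ClassicalEpsilon.

Set Implicit Arguments.
Unset Strict Implicit.
Unset Printing Implicit Defensive.

Import GRing.Theory.
Local Open Scope ring_scope.

Section HomDefs.
Variable k : fieldType.

Definition bilinear_map (U V W : lmodType k) (f : U -> V -> W) : Prop :=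
  (forall u, linear (f u)) /\ (forall v, linear (fun u => f u v)).

Record tensor_product (U V : lmodType k) := TensorProduct {
  tp_carrier :> lmodType k;
  tp_tens : U -> V -> tp_carrier;
  tp_tens_bilinear : bilinear_map tp_tens;
  tp_universal : forall (W : lmodType k) (f : U -> V -> W),
    bilinear_map f ->
    exists! g : tp_carrier -> W, linear g /\ forall u v, g (tp_tens u v) = f u v
}.

Definition tensor_lift (U V : lmodType k) (T : tensor_product U V)
  (W : lmodType k) (f : U -> V -> W) : T -> W :=
  epsilon (inhabits (fun _ : T => 0 : W))
    (fun g : T -> W => linear g /\ forall u v, g (tp_tens T u v) = f u v).
Arguments tensor_lift {U V} T {W} f.

Definition tensor_map (U V U' V' : lmodType k) (T : tensor_product U V)
  (T' : tensor_product U' V') (f : U -> U') (g : V -> V') : T -> T' :=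
  tensor_lift T (fun u v => tp_tens T' (f u) (g v)).
Arguments tensor_map {U V U' V'} T T' f g.

Definition tensor_assoc (U V W : lmodType k) (TUV : tensor_product U V)
  (TL : tensor_product TUV W) (TVW : tensor_product V W)
  (TR : tensor_product U TVW) : TL -> TR :=
  tensor_lift TL (fun t w =>
    tensor_lift TUV (fun u v => tp_tens TR u (tp_tens TVW v w)) t).
Arguments tensor_assoc {U V W} TUV TL TVW TR.

Definition tensor_mul (A B : lmodType k) (muA : A -> A -> A) (muB : B -> B -> B)
  (T : tensor_product A B) : T -> T -> T :=
  fun t t' => tensor_lift T (fun a b =>
    tensor_lift T (fun a' b' => tp_tens T (muA a a') (muB b b')) t') t.
Arguments tensor_mul {A B} muA muB T.

Definition hom_assoc (A : lmodType k) (mu : A -> A -> A) (al : A -> A) : Prop :=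
  [/\ bilinear_map mu, linear al,
      forall x y, al (mu x y) = mu (al x) (al y) &
      forall x y z, mu (al x) (mu y z) = mu (mu x y) (al z)].

(* Hom-bialgebra (H, mu, Delta, alpha) without (co)units *)
Definition hom_bialgebra (H : lmodType k) (mu : H -> H -> H)
  (THH : tensor_product H H) (Delta : H -> THH) (al : H -> H)
  (THHl : tensor_product THH H) (THHr : tensor_product H THH) : Prop :=
  [/\ hom_assoc mu al, linear Delta,
      (* Delta(h_1) (x) alpha(h_2) = alpha(h_1) (x) Delta(h_2) *)
      forall h, tensor_assoc THH THHl THH THHr
                  (tensor_map THH THHl Delta al (Delta h))
                = tensor_map THH THHr al Delta (Delta h),
      forall h h', Delta (mu h h') = tensor_mul mu mu THH (Delta h) (Delta h') &
      forall h, Delta (al h) = tensor_map THH THH al al (Delta h)].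

Definition right_module_hom_algebra (H : lmodType k) (muH : H -> H -> H)
  (alH : H -> H) (THH : tensor_product H H) (DeltaH : H -> THH)
  (C : lmodType k) (muC : C -> C -> C) (alC : C -> C) (act : C -> H -> C) : Prop :=
  [/\ hom_assoc muC alC, bilinear_map act,
      forall c h, alC (act c h) = act (alC c) (alH h),
      forall c h h', act (act c h) (alH h') = act (alC c) (muH h h') &
      forall c c' h, act (muC c c') (alH (alH h))
                     = tensor_lift THH (fun x y => muC (act c x) (act c' y)) (DeltaH h)].

(* Hom-smash product on H (x) C:
   (h#c)(h'#c') = h alH^-1(h'_1) # (alC^-1(c) . alH^-2(h'_2)) c' *)
Definition smash_mul (H C : lmodType k) (THC : tensor_product H C)
  (muH : H -> H -> H) (alHi : H -> H) (THH : tensor_product H H)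
  (DeltaH : H -> THH) (muC : C -> C -> C) (alCi : C -> C) (act : C -> H -> C)
  : THC -> THC -> THC :=
  fun t t' => tensor_lift THC (fun h c =>
    tensor_lift THC (fun h' c' =>
      tensor_lift THH (fun x y =>
        tp_tens THC (muH h (alHi x)) (muC (act (alCi c) (alHi (alHi y))) c'))
        (DeltaH h')) t') t.

(* lambda(h#c) = h_1 (x) (h_2 # alC(c)) *)
Definition smash_coaction (H C : lmodType k) (THC : tensor_product H C)
  (THM : tensor_product H THC) (THH : tensor_product H H) (DeltaH : H -> THH)
  (alC : C -> C) : THC -> THM :=
  tensor_lift THC (fun h c =>
    tensor_lift THH (fun x y => tp_tens THM x (tp_tens THC y (alC c))) (DeltaH h)).

Definition left_comodule (H : lmodType k) (alH : H -> H)
  (THH : tensor_product H H) (DeltaH : H -> THH)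
  (M : lmodType k) (alM : M -> M) (THM : tensor_product H M)
  (THHM : tensor_product THH M) (THMr : tensor_product H THM)
  (lam : M -> THM) : Prop :=
  [/\ linear lam,
      forall m, tensor_map THM THM alH alM (lam m) = lam (alM m) &
      forall m, tensor_assoc THH THHM THM THMr (tensor_map THM THHM DeltaH alM (lam m))
                = tensor_map THM THMr alH lam (lam m)].

Definition hom_alg_morphism (A B : lmodType k) (muA : A -> A -> A) (alA : A -> A)
  (muB : B -> B -> B) (alB : B -> B) (f : A -> B) : Prop :=
  [/\ linear f, forall a, f (alA a) = alB (f a) &
      forall a a', f (muA a a') = muB (f a) (f a')].

Definition left_comodule_hom_algebra (H : lmodType k) (muH : H -> H -> H)
  (alH : H -> H) (THH : tensor_product H H) (DeltaH : H -> THH)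
  (D : lmodType k) (muD : D -> D -> D) (alD : D -> D)
  (THD : tensor_product H D) (THHD : tensor_product THH D)
  (THDr : tensor_product H THD) (lam : D -> THD) : Prop :=
  [/\ hom_assoc muD alD,
      left_comodule alH DeltaH alD THHD THDr lam &
      hom_alg_morphism muD alD (tensor_mul muH muD THD)
        (tensor_map THD THD alH alD) lam].

End HomDefs.

Arguments tensor_lift {k U V} T {W} f.
Arguments tensor_map {k U V U' V'} T T' f g.
Arguments tensor_assoc {k U V W} TUV TL TVW TR.
Arguments tensor_mul {k A B} muA muB T.
Arguments hom_assoc {k A} mu al.
Arguments hom_bialgebra {k H} mu THH Delta al THHl THHr.
Arguments right_module_hom_algebra {k H} muH alH THH DeltaH {C} muC alC act.
Arguments smash_mul {k H C} THC muH alHi THH DeltaH muC alCi act.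
Arguments smash_coaction {k H C} THC THM THH DeltaH alC.
Arguments left_comodule {k H} alH THH DeltaH {M} alM THM THHM THMr lam.
Arguments hom_alg_morphism {k A B} muA alA muB alB f.
Arguments left_comodule_hom_algebra {k H} muH alH THH DeltaH {D} muD alD THD THHD THDr lam.

From mathcomp Require Import all_boot all_algebra.
From Stdlib Require Import ClassicalEpsilon FunctionalExtensionality.

(* Every map involved is (multi)linear and every tensor product is spanned by
   pure tensors, so each of the four axioms (Hom-associativity of H # C,
   multiplicativity of alpha, Hom-coassociativity of lambda and
   multiplicativity of lambda) only has to be checked on pure tensors h # c.
   There both sides unfold into iterated Sweedler sums over Delta; these are
   brought to a common shape using Delta(alpha h) = alpha h_1 (x) alpha h_2,
   Delta(h h') = h_1 h'_1 (x) h_2 h'_2 and Hom-coassociativity (to re-bracket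
   double Sweedler sums), after which the summands agree by the Hom-algebra
   axioms of H and of the module Hom-algebra C. *)

Set Implicit Arguments.
Unset Strict Implicit.
Unset Printing Implicit Defensive.
Import GRing.Theory.
Local Open Scope ring_scope.

Section Linearity.
Variable k : fieldType.

Lemma linear_eta (U V : lmodType k) (f : U -> V) :
  linear (fun x => f x) -> linear f.
Proof. by []. Qed.

Lemma linear_id (U : lmodType k) : linear (fun x : U => x).
Proof. by []. Qed.

Lemma linear_comp (U V W : lmodType k) (f : V -> W) (g : U -> V) :
  linear f -> linear g -> linear (fun x => f (g x)).
Proof. by move=> hf hg a u v; rewrite hg hf. Qed.

Lemma bilinear_compl (U V W X : lmodType k) (mu : U -> V -> W) (g : X -> U) v :
  bilinear_map mu -> linear g -> linear (fun x => mu (g x) v).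
Proof. by case=> _ hmu hg; apply: (linear_comp (hmu v) hg). Qed.

Lemma bilinear_compr (U V W X : lmodType k) (mu : U -> V -> W) (g : X -> V) u :
  bilinear_map mu -> linear g -> linear (fun x => mu u (g x)).
Proof. by case=> hmu _ hg; apply: (linear_comp (hmu u) hg). Qed.

Lemma linear_scale_add (U V : lmodType k) (f g : U -> V) a :
  linear f -> linear g -> linear (fun x => a *: f x + g x).
Proof.
move=> hf hg b u v; rewrite hf hg scalerDr !scalerA mulrC -!scalerA.
by rewrite scalerDr addrACA.
Qed.

Lemma can2_linear (U V : lmodType k) (f : U -> V) (g : V -> U) :
  linear f -> cancel f g -> cancel g f -> linear g.
Proof. by move=> hf fK gK a x y; apply: (can_inj fK); rewrite hf !gK. Qed.

Section TensorLift.
Variables (U V : lmodType k) (T : tensor_product U V).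

Lemma tensor_liftP (W : lmodType k) (f : U -> V -> W) : bilinear_map f ->
  linear (tensor_lift T f) /\ forall u v, tensor_lift T f (tp_tens T u v) = f u v.
Proof.
move=> hf; apply: (epsilon_spec (inhabits (fun _ : T => 0 : W))
  (fun g : T -> W => linear g /\ forall u v, g (tp_tens T u v) = f u v)).
by have [g [Hg _]] := tp_universal T hf; exists g.
Qed.

Lemma tensor_lift_tens (W : lmodType k) (f : U -> V -> W) u v : bilinear_map f ->
  tensor_lift T f (tp_tens T u v) = f u v.
Proof. by move=> /tensor_liftP [] _ ->. Qed.

Lemma linear_tensor_lift (W : lmodType k) (f : U -> V -> W) : bilinear_map f ->
  linear (tensor_lift T f).
Proof. by move=> /tensor_liftP []. Qed.

Lemma linear_tensl (X : lmodType k) (g : X -> U) v :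
  linear g -> linear (fun x => tp_tens T (g x) v).
Proof. exact: bilinear_compl (tp_tens_bilinear T). Qed.

Lemma linear_tensr (X : lmodType k) (g : X -> V) u :
  linear g -> linear (fun x => tp_tens T u (g x)).
Proof. exact: bilinear_compr (tp_tens_bilinear T). Qed.

Lemma linear_tensor_ext (W : lmodType k) (g1 g2 : T -> W) : linear g1 -> linear g2 ->
  (forall u v, g1 (tp_tens T u v) = g2 (tp_tens T u v)) -> forall t, g1 t = g2 t.
Proof.
move=> h1 h2 E t.
have bil : bilinear_map (fun u v => g1 (tp_tens T u v)).
  by split=> [u|v]; apply: (linear_comp h1);
    [apply: (linear_tensr _ (@linear_id _)) | apply: (linear_tensl _ (@linear_id _))].
have [g [_ uniq]] := tp_universal T bil.
have e1 := uniq g1 (conj h1 (fun u v => erefl)).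
have e2 := uniq g2 (conj h2 (fun u v => esym (E u v))).
by rewrite -e1 -e2.
Qed.

Lemma linear_tensor_lift_comp (W X : lmodType k) (f : U -> V -> W) (g : X -> T) :
  bilinear_map f -> linear g -> linear (fun x => tensor_lift T f (g x)).
Proof. by move=> /linear_tensor_lift; apply: linear_comp. Qed.

Lemma linear_tensor_lift_param (W X : lmodType k) (F : X -> U -> V -> W) t :
  (forall x, bilinear_map (F x)) -> (forall u v, linear (fun x => F x u v)) ->
  linear (fun x => tensor_lift T (F x) t).
Proof.
move=> hF hF2 a x y.
pose g2 t := a *: tensor_lift T (F x) t + tensor_lift T (F y) t.
apply: (linear_tensor_ext (g2 := g2) _ _ _ t).
- exact: linear_tensor_lift.
- by apply: linear_scale_add; apply: linear_tensor_lift.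
by move=> u v; rewrite /g2 !tensor_lift_tens // hF2.
Qed.

Lemma eq_tensor_lift (W : lmodType k) (f g : U -> V -> W) t :
  (forall u v, f u v = g u v) -> tensor_lift T f t = tensor_lift T g t.
Proof.
move=> E; have -> // : f = g.
by apply: functional_extensionality => u; apply: functional_extensionality => v.
Qed.

Lemma tensor_lift_postcomp (W Y : lmodType k) (g : W -> Y) (f : U -> V -> W) t :
  linear g -> bilinear_map f ->
  g (tensor_lift T f t) = tensor_lift T (fun u v => g (f u v)) t.
Proof.
move=> hg hf.
have hgf : bilinear_map (fun u v => g (f u v)).
  by case: hf => hf1 hf2; split=> [u|v]; apply: (linear_comp hg).
apply: (linear_tensor_ext (g1 := fun t => g (tensor_lift T f t))) => //.
- exact: linear_comp hg (linear_tensor_lift hf).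
- exact: linear_tensor_lift.
by move=> u v; rewrite !tensor_lift_tens.
Qed.

End TensorLift.
End Linearity.

(* Proves [linear f] (resp. [bilinear_map f]) for maps assembled from pure
   tensors, tensor lifts and the linear/bilinear hypotheses in context. *)
Ltac linearity :=
  apply: linear_eta; cbv beta;
  first
  [ exact: linear_id
  | assumption
  | apply: linear_tensl; linearity
  | apply: linear_tensr; linearity
  | apply: linear_tensor_lift_comp; [bilinearity | linearity]
  | apply: linear_tensor_lift_param; [intro; bilinearity | intros; linearity]
  | match goal with H : linear _ |- _ => apply: (linear_comp H); linearity end
  | match goal with H : bilinear_map _ |- _ =>
      first [apply: (bilinear_compl _ H); linearity
            | apply: (bilinear_compr _ H); linearity] end ]
with bilinearity := split => ?; linearity.

Section TensorOperations.
Variable k : fieldType.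

Section TensorMap.
Variables (U V U' V' : lmodType k) (T : tensor_product U V) (T' : tensor_product U' V').
Variables (f : U -> U') (g : V -> V').
Hypotheses (hf : linear f) (hg : linear g).

Lemma tensor_map_tens u v : tensor_map T T' f g (tp_tens T u v) = tp_tens T' (f u) (g v).
Proof. by rewrite /tensor_map tensor_lift_tens //; bilinearity. Qed.

Lemma linear_tensor_map : linear (tensor_map T T' f g).
Proof. by apply: linear_tensor_lift; bilinearity. Qed.

Lemma tensor_lift_map (W : lmodType k) (F : U' -> V' -> W) t : bilinear_map F ->
  tensor_lift T' F (tensor_map T T' f g t) = tensor_lift T (fun u v => F (f u) (g v)) t.
Proof.
move=> hF; rewrite /tensor_map tensor_lift_postcomp; last by bilinearity.
  by apply: eq_tensor_lift => u v; rewrite tensor_lift_tens.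
exact: linear_tensor_lift.
Qed.

End TensorMap.

Lemma tensor_lift_bilinear (U V U' V' W Y Z : lmodType k)
    (T : tensor_product U V) (T' : tensor_product U' V') (B : W -> Y -> Z)
    (F : U -> V -> W) (F' : U' -> V' -> Y) s t :
  bilinear_map B -> bilinear_map F -> bilinear_map F' ->
  B (tensor_lift T F s) (tensor_lift T' F' t) =
  tensor_lift T (fun u v => tensor_lift T' (fun p q => B (F u v) (F' p q)) t) s.
Proof.
move=> hB hF hF'.
rewrite (tensor_lift_postcomp (g := fun s => B s (tensor_lift T' F' t))) //;
  last by linearity.
by apply: eq_tensor_lift => u v; rewrite tensor_lift_postcomp //; linearity.
Qed.

Section TensorMul.
Variables (A B : lmodType k) (muA : A -> A -> A) (muB : B -> B -> B).
Variable T : tensor_product A B.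
Hypotheses (hA : bilinear_map muA) (hB : bilinear_map muB).

Lemma tensor_mul_tens a b a' b' :
  tensor_mul muA muB T (tp_tens T a b) (tp_tens T a' b') =
  tp_tens T (muA a a') (muB b b').
Proof. by rewrite /tensor_mul !tensor_lift_tens //; bilinearity. Qed.

Lemma bilinear_tensor_mul : bilinear_map (tensor_mul muA muB T).
Proof. by rewrite /tensor_mul; bilinearity. Qed.

Lemma tensor_lift_mul (W : lmodType k) (F : A -> B -> W) s t : bilinear_map F ->
  tensor_lift T F (tensor_mul muA muB T s t) =
  tensor_lift T (fun a b => tensor_lift T (fun p q => F (muA a p) (muB b q)) t) s.
Proof.
move=> hF; have hm := bilinear_tensor_mul.
apply: (linear_tensor_ext
  (g1 := fun s => tensor_lift T F (tensor_mul muA muB T s t))); try linearity.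
move=> a b; rewrite tensor_lift_tens; last by bilinearity.
apply: (linear_tensor_ext
  (g1 := fun t => tensor_lift T F (tensor_mul muA muB T (tp_tens T a b) t)));
  try linearity.
by move=> p q; rewrite tensor_mul_tens !tensor_lift_tens //; bilinearity.
Qed.

End TensorMul.

Section TensorAssoc.
Variables (U V W : lmodType k) (TUV : tensor_product U V).
Variables (TL : tensor_product TUV W) (TVW : tensor_product V W).
Variable TR : tensor_product U TVW.

Lemma tensor_assoc_tens t w :
  tensor_assoc TUV TL TVW TR (tp_tens TL t w) =
  tensor_lift TUV (fun u v => tp_tens TR u (tp_tens TVW v w)) t.
Proof. by rewrite /tensor_assoc !tensor_lift_tens //; bilinearity. Qed.

Lemma linear_tensor_assoc : linear (tensor_assoc TUV TL TVW TR).
Proof. by rewrite /tensor_assoc; apply: linear_tensor_lift; bilinearity. Qed.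

End TensorAssoc.

Lemma exchange_tensor_lift (U1 V1 U2 V2 W : lmodType k) (T1 : tensor_product U1 V1)
    (T2 : tensor_product U2 V2) (F : U1 -> V1 -> U2 -> V2 -> W) s t :
  (forall a b, bilinear_map (F a b)) ->
  (forall p q, bilinear_map (fun a b => F a b p q)) ->
  tensor_lift T1 (fun a b => tensor_lift T2 (F a b) t) s =
  tensor_lift T2 (fun p q => tensor_lift T1 (fun a b => F a b p q) s) t.
Proof.
move=> h1 h2.
have b1 : bilinear_map (fun a b => tensor_lift T2 (F a b) t).
  by split=> [a|b]; apply: linear_tensor_lift_param => // p q; case: (h2 p q).
apply: (linear_tensor_ext
  (g1 := fun s => tensor_lift T1 (fun a b => tensor_lift T2 (F a b) t) s)
  (g2 := fun s => tensor_lift T2 (fun p q => tensor_lift T1 (fun a b => F a b p q) s) t)).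
- exact: linear_tensor_lift.
- apply: linear_tensor_lift_param => [s'|p q]; last exact: linear_tensor_lift.
  by split=> [p|q]; apply: linear_tensor_lift_param => // a b; case: (h1 a b).
move=> u v; rewrite tensor_lift_tens //.
by apply: eq_tensor_lift => p q; rewrite tensor_lift_tens.
Qed.

Lemma tensor_ext2 (U V U' V' W : lmodType k) (T : tensor_product U V)
    (T' : tensor_product U' V') (F G : T -> T' -> W) :
  (forall y, linear (fun x => F x y)) -> (forall y, linear (fun x => G x y)) ->
  (forall x, linear (F x)) -> (forall x, linear (G x)) ->
  (forall u v u' v', F (tp_tens T u v) (tp_tens T' u' v') =
                     G (tp_tens T u v) (tp_tens T' u' v')) ->
  forall x y, F x y = G x y.
Proof.
move=> h1 h2 h3 h4 E x y.
apply: (linear_tensor_ext (g1 := fun x => F x y) (g2 := fun x => G x y)) => // u v.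
by apply: (linear_tensor_ext (g1 := F _) (g2 := G _)) => // u' v'.
Qed.

Lemma tensor_ext3 (U V W : lmodType k) (T : tensor_product U V)
    (F G : T -> T -> T -> W) :
  (forall y z, linear (fun x => F x y z)) -> (forall y z, linear (fun x => G x y z)) ->
  (forall x z, linear (fun y => F x y z)) -> (forall x z, linear (fun y => G x y z)) ->
  (forall x y, linear (F x y)) -> (forall x y, linear (G x y)) ->
  (forall u v u' v' u'' v'',
     F (tp_tens T u v) (tp_tens T u' v') (tp_tens T u'' v'') =
     G (tp_tens T u v) (tp_tens T u' v') (tp_tens T u'' v'')) ->
  forall x y z, F x y z = G x y z.
Proof.
move=> h1 h2 h3 h4 h5 h6 E x y z.
apply: (linear_tensor_ext (g1 := fun x => F x y z) (g2 := fun x => G x y z)) => // u v.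
apply: (linear_tensor_ext (g1 := fun y => F _ y z) (g2 := fun y => G _ y z)) => // u' v'.
by apply: (linear_tensor_ext (g1 := F _ _) (g2 := G _ _)) => // u'' v''.
Qed.

End TensorOperations.

Section SmashProduct.
Variables (k : fieldType) (H C : lmodType k) (muH : H -> H -> H) (alH alHi : H -> H)
  (THH : tensor_product H H) (DeltaH : H -> THH)
  (THHl : tensor_product THH H) (THHr : tensor_product H THH)
  (muC : C -> C -> C) (alC alCi : C -> C) (act : C -> H -> C)
  (THC : tensor_product H C) (THM : tensor_product H THC)
  (THHM : tensor_product THH THC) (THMr : tensor_product H THM).
Hypotheses (bmuH : bilinear_map muH) (lalH : linear alH)
  (alH_mul : forall x y, alH (muH x y) = muH (alH x) (alH y))
  (assocH : forall x y z, muH (alH x) (muH y z) = muH (muH x y) (alH z))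
  (lDelta : linear DeltaH)
  (coassoc : forall h, tensor_assoc THH THHl THH THHr
                         (tensor_map THH THHl DeltaH alH (DeltaH h))
                       = tensor_map THH THHr alH DeltaH (DeltaH h))
  (Delta_mul : forall h h',
     DeltaH (muH h h') = tensor_mul muH muH THH (DeltaH h) (DeltaH h'))
  (Delta_alH : forall h, DeltaH (alH h) = tensor_map THH THH alH alH (DeltaH h))
  (bmuC : bilinear_map muC) (lalC : linear alC)
  (alC_mul : forall x y, alC (muC x y) = muC (alC x) (alC y))
  (assocC : forall x y z, muC (alC x) (muC y z) = muC (muC x y) (alC z))
  (bact : bilinear_map act)
  (alC_act : forall c h, alC (act c h) = act (alC c) (alH h))
  (act_mul : forall c h h', act (act c h) (alH h') = act (alC c) (muH h h'))
  (act_Delta : forall c c' h, act (muC c c') (alH (alH h))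
     = tensor_lift THH (fun x y => muC (act c x) (act c' y)) (DeltaH h))
  (alHK : cancel alH alHi) (alHiK : cancel alHi alH)
  (alCK : cancel alC alCi) (alCiK : cancel alCi alC).

(* [LH F (D h)] is the Sweedler sum of [F h_1 h_2]. *)
Local Notation LH := (tensor_lift THH).
Local Notation D := DeltaH.

Lemma linear_alHi : linear alHi.
Proof. exact: can2_linear lalH alHK alHiK. Qed.

Lemma linear_alCi : linear alCi.
Proof. exact: can2_linear lalC alCK alCiK. Qed.

Lemma alHi_mul x y : alHi (muH x y) = muH (alHi x) (alHi y).
Proof. by apply: (can_inj alHK); rewrite alH_mul !alHiK. Qed.

Lemma alCi_mul x y : alCi (muC x y) = muC (alCi x) (alCi y).
Proof. by apply: (can_inj alCK); rewrite alC_mul !alCiK. Qed.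

Lemma alCi_act c h : alCi (act c h) = act (alCi c) (alHi h).
Proof. by apply: (can_inj alCK); rewrite alC_act !alCiK alHiK. Qed.

Lemma sweedler_alH (W : lmodType k) (F : H -> H -> W) h : bilinear_map F ->
  LH F (D (alH h)) = LH (fun a b => F (alH a) (alH b)) (D h).
Proof. by move=> hF; rewrite Delta_alH tensor_lift_map. Qed.

Lemma sweedler_alHi (W : lmodType k) (F : H -> H -> W) h : bilinear_map F ->
  LH F (D (alHi h)) = LH (fun a b => F (alHi a) (alHi b)) (D h).
Proof.
move=> hF; have li := linear_alHi.
rewrite -{2}(alHiK h) sweedler_alH; last by bilinearity.
by apply: eq_tensor_lift => a b; rewrite !alHK.
Qed.

Lemma sweedler_mul (W : lmodType k) (F : H -> H -> W) h h' : bilinear_map F ->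
  LH F (D (muH h h')) =
  LH (fun a b => LH (fun p q => F (muH a p) (muH b q)) (D h')) (D h).
Proof. by move=> hF; rewrite Delta_mul tensor_lift_mul. Qed.

Lemma sweedler_coassoc (W : lmodType k) (G : H -> H -> H -> W) h :
  (forall a, bilinear_map (G a)) -> (forall c, bilinear_map (fun a b => G a b c)) ->
  LH (fun a b => LH (fun p q => G p q (alH b)) (D a)) (D h) =
  LH (fun a b => LH (fun p q => G (alH a) p q) (D b)) (D h).
Proof.
move=> hG1 hG2.
pose Phi a t := LH (G a) t.
have bPhi : bilinear_map Phi.
  split=> [a|t]; first exact: linear_tensor_lift.
  by apply: linear_tensor_lift_param => // p q; case: (hG2 q).
have lL : linear (tensor_lift THHr Phi) by apply: linear_tensor_lift.
have la : linear (tensor_assoc THH THHl THH THHr) by apply: linear_tensor_assoc.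
have E := congr1 (tensor_lift THHr Phi) (coassoc h).
rewrite tensor_lift_map // /tensor_map in E.
rewrite (tensor_lift_postcomp (g := tensor_assoc THH THHl THH THHr)) // in E;
  last by bilinearity.
rewrite (tensor_lift_postcomp (g := tensor_lift THHr Phi)) // in E;
  last by bilinearity.
apply: (etrans _ E); apply: eq_tensor_lift => u v.
rewrite tensor_assoc_tens (tensor_lift_postcomp (g := tensor_lift THHr Phi)) //;
  last by bilinearity.
by apply: eq_tensor_lift => p q; rewrite tensor_lift_tens // /Phi tensor_lift_tens.
Qed.

Lemma sweedler_coassoc_alHi (W : lmodType k) (G : H -> H -> H -> W) h :
  (forall a, bilinear_map (G a)) -> (forall c, bilinear_map (fun a b => G a b c)) ->
  LH (fun a b => LH (fun p q => G p q b) (D a)) (D h) =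
  LH (fun a b => LH (fun p q => G (alH a) p (alHi q)) (D b)) (D h).
Proof.
move=> hG1 hG2; have li := linear_alHi.
transitivity (LH (fun a b => LH (fun p q => G p q (alHi (alH b))) (D a)) (D h)).
  by apply: eq_tensor_lift => a b; apply: eq_tensor_lift => p q; rewrite alHK.
apply: (sweedler_coassoc (G := fun p q w => G p q (alHi w))) => [a|c]; split.
- by move=> u; apply: (linear_comp ((hG1 a).1 u)).
- by move=> v; apply: (hG1 a).2.
- by move=> u; apply: (hG2 (alHi c)).1.
- by move=> v; apply: (hG2 (alHi c)).2.
Qed.

Local Notation smash := (smash_mul THC muH alHi THH DeltaH muC alCi act).
Local Notation alM := (tensor_map THC THC alH alC).
Local Notation lam := (smash_coaction THC THM THH DeltaH alC).
Local Notation TC := (tp_tens THC).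
Local Notation TM := (tp_tens THM).

Lemma bilinear_smash : bilinear_map smash.
Proof. by move: linear_alHi linear_alCi => ? ?; rewrite /smash_mul; bilinearity. Qed.

Lemma smash_tens h c h' c' : smash (TC h c) (TC h' c') =
  LH (fun a b => TC (muH h (alHi a)) (muC (act (alCi c) (alHi (alHi b))) c')) (D h').
Proof.
by move: linear_alHi linear_alCi => ? ?; rewrite /smash_mul !tensor_lift_tens //;
  bilinearity.
Qed.

Lemma linear_alM : linear alM.
Proof. exact: linear_tensor_map. Qed.

Lemma alM_tens h c : alM (TC h c) = TC (alH h) (alC c).
Proof. exact: tensor_map_tens. Qed.

Lemma linear_lam : linear lam.
Proof. by rewrite /smash_coaction; apply: linear_tensor_lift; bilinearity. Qed.

Lemma lam_tens h c : lam (TC h c) = LH (fun a b => TM a (TC b (alC c))) (D h).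
Proof. by rewrite /smash_coaction tensor_lift_tens //; bilinearity. Qed.

Lemma alM_smash x y : alM (smash x y) = smash (alM x) (alM y).
Proof.
have bS := bilinear_smash; have la := linear_alM.
have li := linear_alHi; have lci := linear_alCi.
move: x y; apply: (tensor_ext2 (F := fun x y => alM (smash x y))
                               (G := fun x y => smash (alM x) (alM y)));
  try (move=> ?; linearity).
move=> h c h' c'.
rewrite !alM_tens !smash_tens sweedler_alH; last by bilinearity.
rewrite (tensor_lift_postcomp (g := alM)) //; last by bilinearity.
apply: eq_tensor_lift => a b; rewrite alM_tens.
by rewrite alH_mul alC_mul alC_act !alHiK !alHK !alCiK !alCK.
Qed.

Lemma lam_alM x : lam (alM x) = tensor_map THM THM alH alM (lam x).
Proof.
have la := linear_alM; have ll := linear_lam.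
have lm : linear (tensor_map THM THM alH alM) by apply: linear_tensor_map.
move: x; apply: (linear_tensor_ext (g1 := fun x => lam (alM x))
                   (g2 := fun x => tensor_map THM THM alH alM (lam x)));
  try linearity.
move=> h c; rewrite alM_tens !lam_tens sweedler_alH; last by bilinearity.
rewrite (tensor_lift_postcomp (g := tensor_map THM THM alH alM)) //;
  last by bilinearity.
by apply: eq_tensor_lift => a b; rewrite tensor_map_tens // alM_tens.
Qed.

Lemma lam_coassoc x :
  tensor_assoc THH THHM THM THMr (tensor_map THM THHM DeltaH alM (lam x))
  = tensor_map THM THMr alH lam (lam x).
Proof.
have la := linear_alM; have ll := linear_lam; have li := linear_alHi.
have lm1 : linear (tensor_map THM THHM DeltaH alM) by apply: linear_tensor_map.
have lm2 : linear (tensor_map THM THMr alH lam) by apply: linear_tensor_map.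
have las : linear (tensor_assoc THH THHM THM THMr) by apply: linear_tensor_assoc.
move: x; apply: (linear_tensor_ext
  (g1 := fun x => tensor_assoc THH THHM THM THMr (tensor_map THM THHM DeltaH alM (lam x)))
  (g2 := fun x => tensor_map THM THMr alH lam (lam x))); try linearity.
move=> h c; rewrite !lam_tens.
rewrite (tensor_lift_postcomp (g := fun t =>
  tensor_assoc THH THHM THM THMr (tensor_map THM THHM DeltaH alM t)));
  [|linearity|bilinearity].
rewrite (tensor_lift_postcomp (g := tensor_map THM THMr alH lam)) //;
  last by bilinearity.
under eq_tensor_lift => a b do rewrite tensor_map_tens // alM_tens tensor_assoc_tens.
under [RHS]eq_tensor_lift => a b do
  [rewrite tensor_map_tens // lam_tens (tensor_lift_postcomp (g := tp_tens THMr (alH a)));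
   [|linearity|bilinearity]].
rewrite sweedler_coassoc_alHi; [|move=> ?; bilinearity..].
by apply: eq_tensor_lift => a b; apply: eq_tensor_lift => p q; rewrite alHiK.
Qed.

Lemma lam_smash x y : lam (smash x y) = tensor_mul muH smash THM (lam x) (lam y).
Proof.
have bS := bilinear_smash; have ll := linear_lam.
have li := linear_alHi; have lci := linear_alCi.
have bM : bilinear_map (tensor_mul muH smash THM) by apply: bilinear_tensor_mul.
move: x y; apply: (tensor_ext2 (F := fun x y => lam (smash x y))
                     (G := fun x y => tensor_mul muH smash THM (lam x) (lam y)));
  try (move=> ?; linearity).
move=> h c h' c'.
rewrite smash_tens (tensor_lift_postcomp (g := lam)) //; last by bilinearity.
under eq_tensor_lift => a b do [rewrite lam_tens sweedler_mul; last by bilinearity].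
under eq_tensor_lift => a b do
  [under eq_tensor_lift => u v do [rewrite sweedler_alHi; last by bilinearity]].
rewrite exchange_tensor_lift; [| move=> ? ?; bilinearity ..].
under eq_tensor_lift => u v do [rewrite sweedler_coassoc_alHi; [|move=> ?; bilinearity..]].
rewrite !lam_tens tensor_lift_bilinear //; [|bilinearity..].
apply: eq_tensor_lift => u v; apply: eq_tensor_lift => a b.
rewrite tensor_mul_tens // smash_tens
  (tensor_lift_postcomp (g := TM (muH u a))); [|linearity|bilinearity].
apply: eq_tensor_lift => p q.
by rewrite alHK alC_mul alC_act !alCiK !alHiK alCK.
Qed.

Lemma act_mul_alHi s t b : act (muC s t) (alHi b) =
  LH (fun g1 g2 => muC (act s (alHi (alHi (alHi g1))))
                       (act t (alHi (alHi (alHi g2))))) (D b).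
Proof.
have li := linear_alHi.
have -> : alHi b = alH (alH (alHi (alHi (alHi b)))) by rewrite !alHiK.
by rewrite act_Delta !sweedler_alHi //; bilinearity.
Qed.

Lemma assocC_alCi c Z t c'' :
  muC (act c Z) (muC t c'') = muC (muC (act (alCi c) (alHi Z)) t) (alC c'').
Proof. by rewrite -assocC alC_act alCiK alHiK. Qed.

Lemma act_act_alHi s q g : act (act s q) (alHi g) = act (alC s) (muH q (alHi (alHi g))).
Proof. by rewrite -act_mul alHiK. Qed.

Lemma tens_mull_tensor_lift u w (F : H -> H -> C) t : bilinear_map F ->
  TC u (muC (LH F t) w) = LH (fun a b => TC u (muC (F a b) w)) t.
Proof.
by move=> hF; rewrite (tensor_lift_postcomp (g := fun t => TC u (muC t w)));
  [|linearity|bilinearity].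
Qed.

Lemma smash_hom_assoc x y z : smash (alM x) (smash y z) = smash (smash x y) (alM z).
Proof.
have bS := bilinear_smash; have la := linear_alM.
have li := linear_alHi; have lci := linear_alCi.
move: x y z; apply: (tensor_ext3 (F := fun x y z => smash (alM x) (smash y z))
                                 (G := fun x y z => smash (smash x y) (alM z)));
  try (move=> ? ?; linearity).
move=> h c h' c' h'' c''.
rewrite !alM_tens !smash_tens.
rewrite (tensor_lift_postcomp (g := smash (TC (alH h) (alC c))));
  [|linearity|bilinearity].
rewrite (tensor_lift_postcomp (g := fun t => smash t (TC (alH h'') (alC c''))));
  [|linearity|bilinearity].
under eq_tensor_lift => a b do [rewrite smash_tens sweedler_mul; last by bilinearity].
under eq_tensor_lift => a b do
  [under eq_tensor_lift => u v do [rewrite sweedler_alHi; last by bilinearity]].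
under eq_tensor_lift => a b do
  [rewrite exchange_tensor_lift; [| move=> ? ?; bilinearity ..]].
rewrite sweedler_coassoc_alHi; [|move=> ?; bilinearity..].
under eq_tensor_lift => a b do
  [rewrite exchange_tensor_lift; [| move=> ? ?; bilinearity ..]].
rewrite exchange_tensor_lift; [| move=> ? ?; bilinearity ..].
under [RHS]eq_tensor_lift => p q do
  [rewrite smash_tens sweedler_alH; last by bilinearity].
under [RHS]eq_tensor_lift => p q do [under eq_tensor_lift => a b do [
  rewrite !alHK alCi_mul alCi_act act_mul_alHi tens_mull_tensor_lift; last by bilinearity]].
apply: eq_tensor_lift => p q; apply: eq_tensor_lift => a b.
apply: eq_tensor_lift => g1 g2.
by rewrite !alHK alCK assocC_alCi act_act_alHi alCiK !alHi_mul assocH alHiK.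
Qed.

Lemma smash_left_comodule_hom_algebra :
  left_comodule_hom_algebra muH alH THH DeltaH smash alM THM THHM THMr lam.
Proof.
split.
- split; [exact: bilinear_smash | exact: linear_alM | exact: alM_smash
         | exact: smash_hom_assoc].
- by split; [exact: linear_lam | move=> m; rewrite lam_alM | exact: lam_coassoc].
- by split; [exact: linear_lam | exact: lam_alM | exact: lam_smash].
Qed.

End SmashProduct.

Theorem proposition3p15 (k : fieldType) (H C : lmodType k)
  (muH : H -> H -> H) (alH alHi : H -> H)
  (THH : tensor_product H H) (DeltaH : H -> THH)
  (THHl : tensor_product THH H) (THHr : tensor_product H THH)
  (muC : C -> C -> C) (alC alCi : C -> C) (act : C -> H -> C)
  (THC : tensor_product H C) (THM : tensor_product H THC)
  (THHM : tensor_product THH THC) (THMr : tensor_product H THM) :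
  hom_bialgebra muH THH DeltaH alH THHl THHr ->
  right_module_hom_algebra muH alH THH DeltaH muC alC act ->
  cancel alH alHi -> cancel alHi alH ->
  cancel alC alCi -> cancel alCi alC ->
  left_comodule_hom_algebra muH alH THH DeltaH
    (smash_mul THC muH alHi THH DeltaH muC alCi act)
    (tensor_map THC THC alH alC)
    THM THHM THMr
    (smash_coaction THC THM THH DeltaH alC).
Proof.
case=> [[bmuH lalH alH_mul assocH] lDelta coassoc Delta_mul Delta_alH].
case=> [[bmuC lalC alC_mul assocC] bact alC_act act_mul act_Delta] alHK alHiK alCK alCiK.
exact: (smash_left_comodule_hom_algebra THHM THMr bmuH lalH alH_mul assocH lDelta
  coassoc Delta_mul Delta_alH bmuC lalC alC_mul assocC bact alC_act act_mul act_Delta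
  alHK alHiK alCK alCiK).
Qed.
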